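(* Let $\varepsilon\ge0$ and let $\phi:\mathcal{B}\to\mathcal{C}\subseteq\mathcal{B}$ satisfy both $\|\phi(b)-b\|_1\le\varepsilon$ for all $b$ and $\phi(b_1)=\phi(b_2)\Rightarrow\|b_1-b_2\|_1\le\varepsilon$. Let $\{p_c\}_{c\in\mathcal{C}}$ be any family of distributions with $p_c$ supported on $\phi^{-1}(c)$. Let $\pi:\mathcal{B}\to\Delta(\mathcal{A})$ satisfy $\|\pi(b_1)-\pi(b_2)\|_1\le L_\pi\|b_1-b_2\|_1$ (local stability), and assume $V^{[\pi_\phi]_{\rm true}}_{\rm true}$ is $L_V$-Lipschitz on $\mathcal{B}$ with respect to $\|\cdot\|_1$ (value stability). Then $$\big\|V^\pi_{\rm true}-[V^{\pi_\phi}_{\rm bin}]_{\rm true}\big\|_\infty\le L^{[1]}_\phi\,\varepsilon,\qquad L^{[1]}_\phi:=\frac{(L_\pi+1)R_{\max}+2L_V}{1-\gamma}+\frac{\gamma R_{\max}L_\pi+R_{\max}}{(1-\gamma)^2}.$$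
   Context: Finite POMDP with finite $\mathcal{S},\mathcal{A},\mathcal{O}$, transition $\mathbb{T}$, emission $\mathbb{O}$, reward $r:\mathcal{S}\times\mathcal{A}\to[0,R_{\max}]$, discount $\gamma\in[0,1)$. $P(o\mid b,a)=\sum_{s,s'}b(s)\mathbb{T}(s'\mid s,a)\mathbb{O}(o\mid s')$, $b^{o,a}(s')\propto\sum_s b(s)\mathbb{T}(s'\mid s,a)\mathbb{O}(o\mid s')$; $\mathcal{B}\subseteq\Delta(\mathcal{S})$ is the countable set of reachable beliefs. True system: belief MDP on $\mathcal{B}$ with reward $r(b,a)=\sum_s b(s)r(s,a)$ and transitions $b\mapsto b^{o,a}$ w.p. $P(o\mid b,a)$; $V^\pi_{\rm true}(b)=\mathbb{E}[\sum_{t\ge0}\gamma^tr(b_t,a_t)\mid b_0=b]$. Abstract system: MDP on $\mathcal{C}$ with reward $r_\phi(c,a)=\sum_b p_c(b)r(b,a)$ and transitions $P_\phi(c'\mid c,a)=\sum_bp_c(b)\sum_{o:\phi(b^{o,a})=c'}P(o\mid b,a)$. Abstract policy $\pi_\phi(c):=\pi(c)$ with abstract value $V^{\pi_\phi}_{\rm bin}$. Lifts: $[V_{\rm bin}]_{\rm true}(b)=V_{\rm bin}(\phi(b))$, $[\pi_\phi]_{\rm true}(b)=\pi_\phi(\phi(b))$. *)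

From HB Require Import structures.
From mathcomp Require Import all_boot all_order all_algebra.
From mathcomp Require Import all_classical all_reals all_analysis.
Set Implicit Arguments. Unset Strict Implicit. Unset Printing Implicit Defensive.
Import Order.TTheory GRing.Theory Num.Theory.
Local Open Scope classical_set_scope.
Local Open Scope ring_scope.

Section POMDP.
Variables (R : realType) (S A O : finType).
(* transition T s a s' = T(s' | s, a); emission Ob s' o = O(o | s') *)
Variables (T : S -> A -> S -> R) (Ob : S -> O -> R) (r : S -> A -> R).
Variable (gamma : R).

Definition belief := S -> R.

Definition is_dist (X : finType) (d : X -> R) :=
  (forall x, 0 <= d x) /\ \sum_(x : X) d x = 1.

Definition norm1 (X : finType) (f : X -> R) : R := \sum_(x : X) `|f x|.

Definition Pobs (b : belief) (a : A) (o : O) : R :=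
  \sum_(s : S) \sum_(s' : S) b s * T s a s' * Ob s' o.

(* belief update b^{o,a} (defined as 0 when P(o|b,a) = 0; such
   branches always carry weight P(o|b,a) = 0) *)
Definition bupd (b : belief) (a : A) (o : O) : belief :=
  fun s' => (\sum_(s : S) b s * T s a s' * Ob s' o) / Pobs b a o.

Definition rb (b : belief) (a : A) : R := \sum_(s : S) b s * r s a.

Inductive reachable (b0 : belief) : belief -> Prop :=
| reach0 : reachable b0 b0
| reachS b a o : reachable b0 b -> 0 < Pobs b a o ->
    reachable b0 (bupd b a o).

Fixpoint Vtrue_n (pol : belief -> A -> R) (n : nat) (b : belief) : R :=
  match n with
  | 0 => 0
  | n'.+1 => \sum_(a : A) pol b a *
      (rb b a + gamma * \sum_(o : O) Pobs b a o * Vtrue_n pol n' (bupd b a o))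
  end.

(* V^pol_true(b) = E[ sum_{t>=0} gamma^t r(b_t,a_t) | b_0 = b ]
   (limit of the nondecreasing finite-horizon expectations) *)
Definition Vtrue (pol : belief -> A -> R) (b : belief) : \bar R :=
  lim ((Vtrue_n pol n b)%:E @[n --> \oo]).

(* abstract system on C, built from phi and the family p_c (p c b = p_c(b)) *)
Variables (B C : set belief) (phi : belief -> belief) (p : belief -> belief -> R).

Definition rphi (c : belief) (a : A) : \bar R :=
  \esum_(b in B) (p c b * rb b a)%:E.

Definition Pphi (c' c : belief) (a : A) : \bar R :=
  \esum_(b in B) (p c b *
     \sum_(o : O | `[< phi (bupd b a o) = c' >]) Pobs b a o)%:E.

Fixpoint Vbin_n (polphi : belief -> A -> R) (n : nat) (c : belief) : \bar R :=
  match n with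
  | 0 => 0%E
  | n'.+1 => (\sum_(a : A) (polphi c a)%:E *
      (rphi c a + gamma%:E * \esum_(c' in C) (Pphi c' c a * Vbin_n polphi n' c')))%E
  end.

Definition Vbin (polphi : belief -> A -> R) (c : belief) : \bar R :=
  lim (Vbin_n polphi n c @[n --> \oo]).

End POMDP.

Definition Lphi1 (R : realType) (Lpi LV Rmax gamma : R) : R :=
  ((Lpi + 1) * Rmax + 2 * LV) / (1 - gamma)
  + (gamma * Rmax * Lpi + Rmax) / (1 - gamma) ^+ 2.

From HB Require Import structures.
From mathcomp Require Import all_boot all_order all_algebra.
From mathcomp Require Import all_classical all_reals all_analysis.
From mathcomp Require Import ring lra.
Import numFieldNormedType.Exports.
Import Order.TTheory GRing.Theory Num.Theory.
Local Open Scope classical_set_scope.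
Local Open Scope ring_scope.
Set Implicit Arguments. Unset Strict Implicit. Unset Printing Implicit Defensive.

(** Write [w] for the true value of the lifted policy [pi \o phi] and split the error as
    [|V^pi - w| + |w - V_bin \o phi|].  Since [pi b] and [pi (phi b)] are [Lpi * eps]-close
    in l1, the Bellman operators of the two policies differ by at most [Lpi * eps * vmax]
    per step, which accumulates to [Lpi * eps * vmax / (1 - gamma)].  For the second term,
    one step of abstract value iteration at [c] is the [p_c]-average of one true Bellman step
    of [pi \o phi] applied to the lifted abstract iterate.  All beliefs charged by [p_c] lie
    in one fibre of [phi], on which [w] varies by at most [LV * eps], so by induction the
    abstract iterates stay within [LV * eps / (1 - gamma)] of [w], up to the transient
    [gamma ^ n * vmax] of starting from 0.  The two bounds add up to at most [Lphi1 * eps]. *)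

Section FiniteDistributions.
Variables (R : realType) (X : finType).
Implicit Types (d f : X -> R).

Lemma dist_witness d : is_dist d -> exists x, 0 < d x.
Proof.
move=> [d0 d1]; have : \sum_x d x != 0 by rewrite d1 oner_eq0.
by rewrite psumr_neq0 // => /hasP[x _ /= dx]; exists x.
Qed.

Lemma dist_avg_bound d f lo hi : is_dist d ->
  (forall x, 0 < d x -> lo <= f x <= hi) -> lo <= \sum_x d x * f x <= hi.
Proof.
move=> [d0 d1] hf; rewrite -[lo]mul1r -[hi]mul1r -d1 !mulr_suml.
apply/andP; split; apply: ler_sum => x _;
  have := d0 x; rewrite le0r => /orP[/eqP->|dx]; rewrite ?mul0r //;
  by have /andP[? ?] := hf x dx; rewrite ler_wpM2l.
Qed.

Lemma norm1_subC f g : norm1 (f - g) = norm1 (g - f).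
Proof. by apply: eq_bigr => x _; rewrite distrC. Qed.

Lemma dist_sub_avg_le (d1 d2 : X -> R) f M : (forall x, `|f x| <= M) ->
  `|\sum_x (d1 x - d2 x) * f x| <= norm1 (fun x => d1 x - d2 x) * M.
Proof.
move=> hf; rewrite /norm1 mulr_suml; apply: le_trans (ler_norm_sum _ _ _) _.
by apply: ler_sum => x _; rewrite normrM ler_wpM2l.
Qed.

End FiniteDistributions.

Section GeometricLimits.
Variable R : realType.
Implicit Types u v : R ^nat.

Lemma limn_dist_le u v d : cvgn u -> cvgn v ->
  (forall n, `|u n - v n| <= d) -> `|limn u - limn v| <= d.
Proof.
move=> cu cv h; rewrite -limB //; have cuv : cvgn (u - v) by exact: is_cvgB.
by rewrite ler_norml; apply/andP; split;
  [apply: limr_ge|apply: limr_le] => //; apply: nearW => n;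
  have := h n; rewrite ler_norml => /andP[].
Qed.

Lemma limn_geometric_bounds u lo hi M g : `|g| < 1 -> cvgn u ->
  (forall n, lo - g ^+ n * M <= u n <= hi) -> lo <= limn u <= hi.
Proof.
move=> g1 cu h; apply/andP; split; last first.
  by apply: limr_le => //; apply: nearW => n; case/andP: (h n).
have geo : (fun n => lo - g ^+ n * M) @ \oo --> lo.
  rewrite -[X in _ --> X]subr0 -[X in _ - X](mul0r M).
  by apply: cvgB; [exact: cvg_cst|exact: cvgMr_tmp (cvg_expr g1)].
rewrite -(cvg_lim _ geo) //; apply: ler_lim => //; first exact: cvgP geo.
by apply: nearW => n; case/andP: (h n).
Qed.

End GeometricLimits.

Section EsumLinearity.
Variable R : realType.
Local Open Scope ereal_scope.

Lemma esumZl (T : choiceType) (I : set T) (a : T -> \bar R) (k : R) :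
  (0 <= k)%R -> (forall i, I i -> 0 <= a i) ->
  \esum_(i in I) (k%:E * a i) = k%:E * \esum_(i in I) a i.
Proof.
move=> k0 a0; have sumZ (F : set T) : finite_set F -> F `<=` I ->
    \sum_(i \in F) (k%:E * a i) = k%:E * \sum_(i \in F) a i.
  move=> fF FI; rewrite !fsbig_finite //= big_seq [in RHS]big_seq.
  by rewrite ge0_sume_distrr // => i; rewrite in_fset_set // inE => /FI /a0.
rewrite /esum -ereal_supZl //; last first.
  by apply/set0P; exists 0, set0; [exact: fsets_set0|rewrite fsbig_set0].
congr ereal_sup; apply/seteqP; split => x /=.
  by move=> [F [fF FI] <-]; exists (\sum_(i \in F) a i); [exists F|rewrite sumZ].
by move=> [y [F [fF FI] <-] <-]; exists F => //; rewrite sumZ.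
Qed.

Lemma esumZr (T : choiceType) (I : set T) (a : T -> \bar R) (k : R) :
  (0 <= k)%R -> (forall i, I i -> 0 <= a i) ->
  \esum_(i in I) (a i * k%:E) = (\esum_(i in I) a i) * k%:E.
Proof.
move=> k0 a0; rewrite [RHS]muleC -esumZl //; apply: eq_esum => i _; exact: muleC.
Qed.

Lemma exchange_esum (T1 T2 : choiceType) (I : set T1) (J : set T2) (f : T1 -> T2 -> \bar R) :
  (forall i j, I i -> J j -> 0 <= f i j) ->
  \esum_(i in I) \esum_(j in J) f i j = \esum_(j in J) \esum_(i in I) f i j.
Proof.
move=> f0; rewrite (@esum_esum _ _ _ I (fun=> J)) //.
rewrite (@esum_esum _ _ _ J (fun=> I)); last by move=> j i Jj Ii; exact: f0.
rewrite (reindex_esum (J `*`` fun=> I) _ (fun x => (x.2, x.1))) //.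
split=> /=.
- by move=> [j i] [/= Jj Ii]; split.
- by move=> [j1 i1] [j2 i2] /= _ _ [-> ->].
- by move=> [i j] [/= Ii Jj]; exists (j, i).
Qed.

Lemma esum_indicator (T : choiceType) (I : set T) (x : T) (v : T -> \bar R) :
  I x -> 0 <= v x -> \esum_(i in I) (if `[< x = i >] then v i else 0) = v x.
Proof.
move=> Ix v0; transitivity (\esum_(i in [set x]) (if `[< x = i >] then v i else 0)).
  rewrite esum_mkcond [RHS]esum_mkcond; apply: eq_esum => i _.
  case: (pselect (x = i)) => [<-|ne]; last by rewrite asboolF // !if_same.
  by rewrite asboolT // !mem_set.
by rewrite esum_set1 asboolT.
Qed.

End EsumLinearity.

Section EsumAverage.
Variables (R : realType) (T : choiceType) (I : set T) (q : T -> R).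
Hypotheses (q_ge0 : forall i, 0 <= q i) (q_sum1 : (\esum_(i in I) (q i)%:E = 1)%E).
Implicit Types x : T -> R.

Lemma esum_weights_support : exists i, I i /\ q i != 0.
Proof.
apply: contrapT => hn; move: q_sum1; rewrite esum1 => [[/eqP]|i Ii].
  by rewrite eq_sym oner_eq0.
by case: (eqVneq (q i) 0) => [->//|qi]; case: hn; exists i.
Qed.

Lemma esum_avg_le x hi : 0 <= hi -> (forall i, I i -> q i != 0 -> x i <= hi) ->
  (\esum_(i in I) (q i * x i)%:E <= hi%:E)%E.
Proof.
move=> hi0 hx; apply: (@le_trans _ _ (\esum_(i in I) ((q i)%:E * hi%:E))%E).
  apply: le_esum => i Ii; rewrite -EFinM lee_fin.
  by case: (eqVneq (q i) 0) => [->|/(hx i Ii) ?]; rewrite ?mul0r // ler_wpM2l.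
by rewrite esumZr // ?q_sum1 ?mul1e // => i _; rewrite lee_fin.
Qed.

Lemma esum_avg_ge x lo : (forall i, I i -> 0 <= x i) ->
  (forall i, I i -> q i != 0 -> lo <= x i) ->
  (lo%:E <= \esum_(i in I) (q i * x i)%:E)%E.
Proof.
move=> x0 hx; have [lo0|lo_gt0] := lerP lo 0.
  apply: (@le_trans _ _ 0%E); first by rewrite lee_fin.
  by apply: esum_ge0 => i Ii; rewrite lee_fin mulr_ge0 ?x0.
apply: (@le_trans _ _ (\esum_(i in I) ((q i)%:E * lo%:E))%E); last first.
  apply: le_esum => i Ii; rewrite -EFinM lee_fin.
  by case: (eqVneq (q i) 0) => [->|/(hx i Ii) ?]; rewrite ?mul0r // ler_wpM2l.
by rewrite esumZr ?q_sum1 ?mul1e // ?ltW // => i _; rewrite lee_fin.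
Qed.

End EsumAverage.

Section POMDP.
Variables (R : realType) (S A O : finType).
Variables (T : S -> A -> S -> R) (Ob : S -> O -> R) (r : S -> A -> R) (Rmax gamma : R).
Hypotheses (hT : forall s a, is_dist (T s a)) (hOb : forall s, is_dist (Ob s))
  (hr : forall s a, 0 <= r s a <= Rmax).

Local Notation P := (Pobs T Ob).
Local Notation bu := (bupd T Ob).
Local Notation Vn := (Vtrue_n T Ob r gamma).
Implicit Types (b : belief R S) (pol : belief R S -> A -> R) (f g : belief R S -> R).

Lemma Pobs_ge0 b a o : is_dist b -> 0 <= P b a o.
Proof.
move=> [b0 _]; apply: sumr_ge0 => s _; apply: sumr_ge0 => s' _.
by rewrite !mulr_ge0 //; [case: (hT s a)|case: (hOb s')].
Qed.

Lemma Pobs_dist b a : is_dist b -> is_dist (P b a).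
Proof.
move=> hb; split; first by move=> o; exact: Pobs_ge0.
rewrite /Pobs exchange_big /= -[RHS](proj2 hb); apply: eq_bigr => s _.
rewrite exchange_big /= -[RHS]mulr1 -(proj2 (hT s a)) mulr_sumr.
apply: eq_bigr => s' _; rewrite -[RHS]mulr1 -(proj2 (hOb s')) !mulr_sumr.
by apply: eq_bigr.
Qed.

Lemma bupd_dist b a o : is_dist b -> 0 < P b a o -> is_dist (bu b a o).
Proof.
move=> hb hP; split=> [s' | ].
  apply: divr_ge0 (ltW hP); apply: sumr_ge0 => s _.
  by rewrite !mulr_ge0 //; [case: hb|case: (hT s a)|case: (hOb s')].
by rewrite /bupd -mulr_suml [X in X / _]exchange_big mulfV // gt_eqF.
Qed.

Lemma rb_bound b a : is_dist b -> 0 <= rb r b a <= Rmax.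
Proof.
move=> [b0 b1]; apply/andP; split.
  by apply: sumr_ge0 => s _; rewrite mulr_ge0 //; case/andP: (hr s a).
rewrite -[X in _ <= X]mul1r -b1 mulr_suml; apply: ler_sum => s _.
by rewrite ler_wpM2l //; case/andP: (hr s a).
Qed.

Lemma reachable_dist b0 b : is_dist b0 -> reachable T Ob b0 b -> is_dist b.
Proof. by move=> hb0; elim=> // {}b a o _ IH; exact: bupd_dist. Qed.

Definition qvalue f b a := rb r b a + gamma * \sum_o P b a o * f (bu b a o).

Definition bellman pol f b := \sum_a pol b a * qvalue f b a.

Definition vtrue pol b := limn (fun n => Vn pol n b).

Lemma Vtrue_nS pol n b : Vn pol n.+1 b = bellman pol (Vn pol n) b.
Proof. by []. Qed.

Definition vmax := Rmax / (1 - gamma).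

Section InvariantSet.
Variable B : set (belief R S).
Hypotheses (B_dist : forall b, B b -> is_dist b)
  (B_bupd : forall b a o, B b -> 0 < P b a o -> B (bu b a o))
  (gamma_ge0 : 0 <= gamma).

Lemma Pobs_eq0_or_gt0 b a o : B b -> P b a o = 0 \/ 0 < P b a o.
Proof.
move=> hb; have := Pobs_ge0 a o (B_dist hb).
by rewrite le0r => /orP[/eqP|]; [left|right].
Qed.

Lemma Pobs_avg_bound f lo hi b a : B b -> (forall x, B x -> lo <= f x <= hi) ->
  lo <= \sum_o P b a o * f (bu b a o) <= hi.
Proof.
move=> hb hf; apply: dist_avg_bound (Pobs_dist a (B_dist hb)) _ => o hP.
exact: hf _ (B_bupd hb hP).
Qed.

Lemma Pobs_avg_le f g b a : B b -> (forall x, B x -> f x <= g x) ->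
  \sum_o P b a o * f (bu b a o) <= \sum_o P b a o * g (bu b a o).
Proof.
move=> hb hfg; apply: ler_sum => o _.
have [->|hP] := Pobs_eq0_or_gt0 a o hb; first by rewrite !mul0r.
by apply: ler_wpM2l; [exact: ltW|exact: hfg _ (B_bupd hb hP)].
Qed.

Lemma Pobs_avg_addr f k b a : B b ->
  \sum_o P b a o * (f (bu b a o) + k) = \sum_o P b a o * f (bu b a o) + k.
Proof.
move=> hb; rewrite -[k in RHS]mulr1 -(proj2 (Pobs_dist a (B_dist hb))) mulr_sumr.
by rewrite -big_split; apply: eq_bigr => o _ /=; ring.
Qed.

Lemma Pobs_avg_ge0 f b a : B b -> (forall x, B x -> 0 <= f x) ->
  0 <= \sum_o P b a o * f (bu b a o).
Proof.
move=> hb hf; apply: sumr_ge0 => o _.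
have [->|hP] := Pobs_eq0_or_gt0 a o hb; first by rewrite mul0r.
by apply: mulr_ge0; [exact: ltW|exact: hf _ (B_bupd hb hP)].
Qed.

Lemma qvalue_ge0 f b a : B b -> (forall x, B x -> 0 <= f x) -> 0 <= qvalue f b a.
Proof.
move=> hb hf; rewrite addr_ge0 ?mulr_ge0 ?Pobs_avg_ge0 //.
by case/andP: (rb_bound a (B_dist hb)).
Qed.

Section Bellman.
Variable pol : belief R S -> A -> R.
Hypothesis pol_dist : forall b, B b -> is_dist (pol b).

Lemma bellman_le f g b : B b -> (forall x, B x -> f x <= g x) ->
  bellman pol f b <= bellman pol g b.
Proof.
move=> hb hfg; apply: ler_sum => a _; rewrite ler_wpM2l //; first by case: (pol_dist hb).
by rewrite lerD2l ler_wpM2l // Pobs_avg_le.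
Qed.

Lemma bellman_ge0 f b : B b -> (forall x, B x -> 0 <= f x) -> 0 <= bellman pol f b.
Proof.
move=> hb hf; apply: sumr_ge0 => a _; rewrite mulr_ge0 ?qvalue_ge0 //.
by case: (pol_dist hb).
Qed.

Lemma bellman_addr f k b : B b ->
  bellman pol (fun x => f x + k) b = bellman pol f b + gamma * k.
Proof.
move=> hb; rewrite -[gamma * k in RHS]mul1r -(proj2 (pol_dist hb)) mulr_suml.
rewrite /bellman -big_split; apply: eq_bigr => a _ /=.
by rewrite /qvalue Pobs_avg_addr //; ring.
Qed.

Lemma bellman_sandwich f g lo hi b : B b ->
  (forall x, B x -> g x + lo <= f x <= g x + hi) ->
  bellman pol g b + gamma * lo <= bellman pol f b <= bellman pol g b + gamma * hi.
Proof.
move=> hb hfg; rewrite -!bellman_addr //; apply/andP; split; apply: bellman_le => // x hx;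
  by case/andP: (hfg x hx).
Qed.

End Bellman.

Hypotheses (Rmax_ge0 : 0 <= Rmax) (gamma_lt1 : gamma < 1).

Lemma vmax_ge0 : 0 <= vmax.
Proof. by rewrite divr_ge0 // subr_ge0 ltW. Qed.

Lemma vmax_fix : Rmax + gamma * vmax = vmax.
Proof. by rewrite /vmax; field; rewrite subr_eq0 eq_sym lt_eqF. Qed.

Lemma qvalue_bound f b a : B b -> (forall x, B x -> 0 <= f x <= vmax) ->
  0 <= qvalue f b a <= vmax.
Proof.
move=> hb hf; rewrite qvalue_ge0 // => [|x /hf /andP[] //].
have /andP[_ avg_le] := Pobs_avg_bound a hb hf.
have /andP[_ rb_le] := rb_bound a (B_dist hb).
by rewrite -vmax_fix lerD // ler_wpM2l.
Qed.

Lemma bellman_bound pol f b : (forall x, B x -> is_dist (pol x)) -> B b ->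
  (forall x, B x -> 0 <= f x <= vmax) -> 0 <= bellman pol f b <= vmax.
Proof.
by move=> pol_dist hb hf; apply: dist_avg_bound (pol_dist b hb) _ => a _;
  exact: qvalue_bound.
Qed.

Lemma bellman_policy_dist pol1 pol2 f b : B b -> (forall x, B x -> 0 <= f x <= vmax) ->
  `|bellman pol1 f b - bellman pol2 f b| <= norm1 (fun a => pol1 b a - pol2 b a) * vmax.
Proof.
move=> hb hf; rewrite /bellman -sumrB.
under eq_bigr do rewrite -mulrBl.
apply: dist_sub_avg_le => a; have /andP[q0 q_le] := qvalue_bound a hb hf.
by rewrite ger0_norm.
Qed.

Section TrueValue.
Variable pol : belief R S -> A -> R.
Hypothesis pol_dist : forall b, B b -> is_dist (pol b).

Lemma Vtrue_n_bound n b : B b -> 0 <= Vn pol n b <= vmax.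
Proof.
elim: n b => [|n IH] b hb; first by rewrite lexx vmax_ge0.
by rewrite Vtrue_nS bellman_bound.
Qed.

Lemma Vtrue_n_nondecreasing b : B b -> nondecreasing_seq (fun n => Vn pol n b).
Proof.
move=> hb; apply/nondecreasing_seqP => n; elim: n b hb => [|n IH] b hb.
  by case/andP: (Vtrue_n_bound 1 hb).
by rewrite (Vtrue_nS pol n.+1) (Vtrue_nS pol n); apply: bellman_le.
Qed.

Lemma Vtrue_n_cvg b : B b -> cvgn (fun n => Vn pol n b).
Proof.
move=> hb; apply: nondecreasing_is_cvgn; first exact: Vtrue_n_nondecreasing.
by exists vmax => _ [n _ <-]; case/andP: (Vtrue_n_bound n hb).
Qed.

Lemma Vtrue_vtrue b : B b -> Vtrue T Ob r gamma pol b = (vtrue pol b)%:E.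
Proof. by move=> hb; exact: EFin_lim (Vtrue_n_cvg hb). Qed.

Lemma vtrue_bound b : B b -> 0 <= vtrue pol b <= vmax.
Proof.
move=> hb; have cV := Vtrue_n_cvg hb.
by apply/andP; split; [apply: limr_ge|apply: limr_le] => //; apply: nearW => n;
  case/andP: (Vtrue_n_bound n hb).
Qed.

Lemma vtrue_bellman b : B b -> bellman pol (vtrue pol) b = vtrue pol b.
Proof.
move=> hb; apply/esym/(cvg_lim (@Rhausdorff R)); rewrite -cvg_shiftS /=.
apply: cvg_big; first exact: add_continuous.
move=> a _; apply: cvgMl_tmp; apply: cvgD; first exact: cvg_cst.
apply: cvgMl_tmp; apply: cvg_big; first exact: add_continuous.
move=> o _; have [->|hP] := Pobs_eq0_or_gt0 a o hb.
  by rewrite mul0r; under eq_cvg do rewrite mul0r; exact: cvg_cst.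
by apply: cvgMl_tmp; exact: Vtrue_n_cvg (B_bupd hb hP).
Qed.

End TrueValue.

Section PolicyPerturbation.
Variables (pol1 pol2 : belief R S -> A -> R) (delta : R).
Hypotheses (pol1_dist : forall b, B b -> is_dist (pol1 b))
  (pol2_dist : forall b, B b -> is_dist (pol2 b))
  (pol_close : forall b, B b -> norm1 (fun a => pol1 b a - pol2 b a) <= delta).

Lemma Vtrue_n_policy_dist n b : B b ->
  `|Vn pol1 n b - Vn pol2 n b| <= delta * vmax / (1 - gamma).
Proof.
have omg_gt0 : 0 < 1 - gamma by rewrite subr_gt0.
set F := delta * vmax / (1 - gamma).
have F_fix : delta * vmax + gamma * F = F by rewrite /F; field; rewrite gt_eqF.
elim: n b => [|n IH] b hb.
  have delta_ge0 : 0 <= delta.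
    by apply: le_trans (pol_close hb); apply: sumr_ge0 => a _.
  rewrite /= subrr normr0 /F; apply: divr_ge0; last exact: ltW.
  by apply: mulr_ge0 => //; exact: vmax_ge0.
rewrite !Vtrue_nS -F_fix -(subrKA (bellman pol2 (Vn pol1 n) b)).
apply: le_trans (ler_normD _ _) _; apply: lerD.
  apply: le_trans (bellman_policy_dist _ _ hb (Vtrue_n_bound pol1_dist n)) _.
  by rewrite ler_wpM2r ?vmax_ge0 ?pol_close.
suff /andP[lo hi] : bellman pol2 (Vn pol2 n) b + gamma * - F <= bellman pol2 (Vn pol1 n) b
    <= bellman pol2 (Vn pol2 n) b + gamma * F.
  by rewrite ler_norml; apply/andP; split; lra.
apply: bellman_sandwich => // x hx.
by have := IH x hx; rewrite ler_norml => /andP[? ?]; apply/andP; split; lra.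
Qed.

Lemma vtrue_policy_dist b : B b ->
  `|vtrue pol1 b - vtrue pol2 b| <= delta * vmax / (1 - gamma).
Proof.
move=> hb; apply: limn_dist_le; [exact: Vtrue_n_cvg|exact: Vtrue_n_cvg|].
by move=> n; exact: Vtrue_n_policy_dist.
Qed.

End PolicyPerturbation.

Section Abstraction.
Variables (phi : belief R S -> belief R S) (C : set (belief R S))
  (p : belief R S -> belief R S -> R) (pi : belief R S -> A -> R).
Hypotheses (C_sub : C `<=` B) (phi_C : forall b, B b -> C (phi b))
  (pi_dist : forall b, B b -> is_dist (pi b))
  (p_dist : forall c, C c ->
     (forall b, 0 <= p c b) /\
     (forall b, p c b != 0 -> B b /\ phi b = c) /\
     (\esum_(b in B) (p c b)%:E = 1)%E).

Local Notation U := (Vbin_n T Ob r gamma B C phi p pi).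
Local Notation pi_phi := (fun b => pi (phi b)).

Lemma p_ge0 c : C c -> forall b, 0 <= p c b.
Proof. by case/p_dist. Qed.

Lemma p_support c b : C c -> p c b != 0 -> B b /\ phi b = c.
Proof. by case/p_dist => _ [+ _]; apply. Qed.

Lemma p_sum1 c : C c -> (\esum_(b in B) (p c b)%:E = 1)%E.
Proof. by case/p_dist => _ []. Qed.

Lemma pi_phi_dist b : B b -> is_dist (pi (phi b)).
Proof. by move=> hb; exact/pi_dist/C_sub/phi_C. Qed.

Lemma C_witness c : C c -> exists b, B b /\ phi b = c.
Proof.
move=> hc; have [b [hb /(p_support hc) [_ <-]]] := esum_weights_support (p_sum1 hc).
by exists b.
Qed.

Lemma rphi_ge0 c a : C c -> (0 <= rphi r B p c a)%E.
Proof.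
move=> hc; apply: esum_ge0 => b hb; rewrite lee_fin mulr_ge0 ?p_ge0 //.
by case/andP: (rb_bound a (B_dist hb)).
Qed.

Lemma Pphi_ge0 c' c a : C c -> (0 <= Pphi T Ob B phi p c' c a)%E.
Proof.
move=> hc; apply: esum_ge0 => b hb; rewrite lee_fin mulr_ge0 ?p_ge0 //.
by apply: sumr_ge0 => o _; exact: Pobs_ge0 (B_dist hb).
Qed.

Lemma Vbin_n_ge0 n c : C c -> (0 <= U n c)%E.
Proof.
elim: n c => [|n IH] c hc //=; apply: sume_ge0 => a _; apply: mule_ge0.
  by rewrite lee_fin; case: (pi_dist (C_sub hc)).
rewrite adde_ge0 ?rphi_ge0 // mule_ge0 ?lee_fin //.
by apply: esum_ge0 => c' hc'; rewrite mule_ge0 ?Pphi_ge0 ?IH.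
Qed.

Lemma Vbin_n_nondecreasing n c : C c -> (U n c <= U n.+1 c)%E.
Proof.
elim: n c => [|n IH] c hc; first exact: Vbin_n_ge0.
apply: lee_sum => a _; apply: lee_wpmul2l; first by rewrite lee_fin; case: (pi_dist (C_sub hc)).
rewrite leeD2l // lee_wpmul2l ?lee_fin //.
by apply: le_esum => c' hc'; rewrite lee_wpmul2l ?Pphi_ge0 ?IH.
Qed.

Lemma esum_Pphi g c a : C c -> (forall c', C c' -> 0 <= g c') ->
  (\esum_(c' in C) (Pphi T Ob B phi p c' c a * (g c')%:E) =
   \esum_(b in B) (p c b * \sum_o P b a o * g (phi (bu b a o)))%:E)%E.
Proof.
move=> hc g0; have p0 := p_ge0 hc.
have P0 b o : B b -> 0 <= P b a o by move=> hb; exact: Pobs_ge0 (B_dist hb).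
have term_ge0 b c' o : B b -> C c' -> 0 <= p c b * P b a o * g c'.
  by move=> hb hc'; rewrite !mulr_ge0 ?P0 ?g0.
transitivity (\esum_(c' in C) \esum_(b in B)
    (\sum_(o | `[< phi (bu b a o) = c' >]) p c b * P b a o * g c')%:E)%E.
  apply: eq_esum => c' hc'; rewrite /Pphi -esumZr ?g0 //; last first.
    by move=> b hb; rewrite lee_fin mulr_ge0 // sumr_ge0 // => o _; exact: P0.
  by apply: eq_esum => b hb; rewrite -EFinM mulr_sumr mulr_suml.
rewrite exchange_esum; last first.
  by move=> c' b hc' hb; rewrite lee_fin sumr_ge0 // => o _; exact: term_ge0.
apply: eq_esum => b hb.
transitivity (\sum_o \esum_(c' in C)
    (if `[< phi (bu b a o) = c' >] then (p c b * P b a o * g c')%:E else 0))%E.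
  rewrite -esum_sum; last by move=> c' o hc' _; case: ifP => //; rewrite lee_fin term_ge0.
  by apply: eq_esum => c' hc'; rewrite big_mkcond /= -sumEFin; apply: eq_bigr => o _; case: ifP.
rewrite mulr_sumr -sumEFin; apply: eq_bigr => o _.
have [P_eq0|hP] := Pobs_eq0_or_gt0 a o hb.
  rewrite [in RHS]P_eq0 mul0r mulr0; apply: esum1 => c' _; case: ifP => // _.
  by rewrite P_eq0 mulr0 mul0r.
have hC := phi_C (B_bupd hb hP).
rewrite (@esum_indicator _ _ _ _ (fun c' => (p c b * P b a o * g c')%:E)) //.
  by rewrite mulrA.
by rewrite lee_fin term_ge0.
Qed.

Lemma Vbin_nS n c : U n.+1 c = (\sum_a (pi c a)%:E * (rphi r B p c a
  + gamma%:E * \esum_(c' in C) (Pphi T Ob B phi p c' c a * U n c')))%E.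
Proof. by []. Qed.

Lemma Vbin_nS_avg_bellman n g c : C c -> (forall c', C c' -> U n c' = (g c')%:E) ->
  U n.+1 c = (\esum_(b in B) (p c b * bellman pi_phi (fun x => g (phi x)) b)%:E)%E.
Proof.
move=> hc hg; have p0 := p_ge0 hc.
have g0 c' : C c' -> 0 <= g c' by move=> hc'; rewrite -lee_fin -hg // Vbin_n_ge0.
set f := fun x => g (phi x).
have f0 x : B x -> 0 <= f x by move=> hx; exact/g0/phi_C.
have G0 b a : B b -> 0 <= \sum_o P b a o * f (bu b a o).
  by move=> hb; exact: Pobs_avg_ge0 hb f0.
have pq0 a b : B b -> 0 <= p c b * qvalue f b a by move=> hb; rewrite mulr_ge0 ?qvalue_ge0.
rewrite Vbin_nS.
transitivity (\sum_a \esum_(b in B) (pi c a * (p c b * qvalue f b a))%:E)%E.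
  apply: eq_bigr => a _; have pi0 : 0 <= pi c a by case: (pi_dist (C_sub hc)).
  under eq_esum => c' hc' do rewrite (hg c' hc').
  rewrite esum_Pphi // /rphi -esumZl //; last first.
    by move=> b hb; rewrite lee_fin; exact: mulr_ge0 (p0 b) (G0 b a hb).
  rewrite -esumD; first last.
  - by move=> b hb; rewrite mule_ge0 ?lee_fin //; exact: mulr_ge0 (p0 b) (G0 b a hb).
  - by move=> b hb; rewrite lee_fin mulr_ge0 //; case/andP: (rb_bound a (B_dist hb)).
  rewrite -esumZl //; last first.
    by move=> b hb; rewrite -EFinM -EFinD lee_fin mulrCA -mulrDr; exact: pq0.
  by apply: eq_esum => b _; rewrite -EFinM /qvalue /f; congr EFin; ring.
rewrite -esum_sum; last first.
  by move=> b a hb _; rewrite lee_fin mulr_ge0 ?pq0 //; case: (pi_dist (C_sub hc)).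
apply: eq_esum => b hb; rewrite sumEFin; congr EFin.
have [->|/(p_support hc) [_ <-]] := eqVneq (p c b) 0.
  by rewrite mul0r big1 // => a _; rewrite mul0r mulr0.
by rewrite /bellman mulr_sumr; apply: eq_bigr => a _; rewrite mulrCA.
Qed.

Section StableLiftedValue.
Variables (LV eps : R).
Local Notation w := (vtrue pi_phi).
Hypotheses (LV_ge0 : 0 <= LV) (eps_ge0 : 0 <= eps)
  (phi_close : forall b1 b2, B b1 -> B b2 -> phi b1 = phi b2 -> norm1 (b1 - b2) <= eps)
  (V_lip : forall b1 b2, B b1 -> B b2 ->
     (`|Vtrue T Ob r gamma pi_phi b1 - Vtrue T Ob r gamma pi_phi b2|
       <= (LV * norm1 (b1 - b2))%:E)%E).

Lemma vtrue_fiber_dist b1 b2 : B b1 -> B b2 -> phi b1 = phi b2 -> `|w b1 - w b2| <= LV * eps.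
Proof.
move=> hb1 hb2 e; have := V_lip hb1 hb2.
rewrite !(Vtrue_vtrue pi_phi_dist) // -EFinB lee_fin => /le_trans; apply.
by rewrite ler_wpM2l // phi_close.
Qed.

Lemma Vbin_n_bounds n b : B b ->
  ((w b - LV * eps / (1 - gamma) - gamma ^+ n * vmax)%:E <= U n (phi b)
     <= (w b + LV * eps / (1 - gamma))%:E)%E.
Proof.
set kappa := LV * eps / (1 - gamma).
have omg_gt0 : 0 < 1 - gamma by rewrite subr_gt0.
have kappa_ge0 : 0 <= kappa by rewrite divr_ge0 ?mulr_ge0 // ltW.
have kappa_fix : LV * eps + gamma * kappa = kappa by rewrite /kappa; field; rewrite gt_eqF.
elim: n b => [|n IH] b hb.
  have /andP[w0 w_le] := vtrue_bound pi_phi_dist hb.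
  by rewrite /= !lee_fin expr0 mul1r; apply/andP; split; lra.
pose g c' := fine (U n c').
have hg c' : C c' -> U n c' = (g c')%:E.
  move=> /C_witness [b' [hb' <-]]; have /andP[lo hi] := IH b' hb'.
  by rewrite /g fineK //; move: lo hi; case: (U n (phi b')).
have g_bounds x : B x ->
    w x + - (kappa + gamma ^+ n * vmax) <= g (phi x) <= w x + kappa.
  move=> hx; have := IH x hx; rewrite (hg _ (phi_C hx)) !lee_fin => /andP[? ?].
  by apply/andP; split; lra.
have hc := phi_C hb; rewrite (Vbin_nS_avg_bellman hc hg).
have [w0 _] := andP (vtrue_bound pi_phi_dist hb).
apply/andP; split; last first.
  apply: (esum_avg_le (p_ge0 hc) (p_sum1 hc)) => [|b' hb' /(p_support hc) [_ e]]; first lra.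
  have /andP[_ +] := bellman_sandwich pi_phi_dist hb' g_bounds.
  rewrite (vtrue_bellman pi_phi_dist hb'); have := vtrue_fiber_dist hb' hb e.
  by rewrite ler_norml => /andP[? ?] ?; lra.
apply: (esum_avg_ge (p_ge0 hc) (p_sum1 hc)) => [b' hb'|b' hb' /(p_support hc) [_ e]].
  apply: (bellman_ge0 pi_phi_dist) => // x hx.
  by apply: fine_ge0; exact: Vbin_n_ge0 (phi_C hx).
have /andP[+ _] := bellman_sandwich pi_phi_dist hb' g_bounds.
rewrite (vtrue_bellman pi_phi_dist hb'); have := vtrue_fiber_dist hb' hb e.
have -> : gamma * - (kappa + gamma ^+ n * vmax) = - (gamma * kappa) - gamma ^+ n.+1 * vmax.
  by rewrite exprS; ring.
by rewrite ler_norml => /andP[? ?] ?; lra.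
Qed.

Lemma Vbin_dist b : B b -> exists u,
  Vbin T Ob r gamma B C phi p pi (phi b) = u%:E /\ `|w b - u| <= LV * eps / (1 - gamma).
Proof.
move=> hb; have hc := phi_C hb; pose u n := fine (U n (phi b)).
have Uu n : U n (phi b) = (u n)%:E.
  by have /andP[lo hi] := Vbin_n_bounds n hb; rewrite /u fineK //; move: lo hi; case: (U n _).
have u_nd : nondecreasing_seq u.
  by apply/nondecreasing_seqP => n; rewrite -lee_fin -!Uu Vbin_n_nondecreasing.
have u_bounds n : w b - LV * eps / (1 - gamma) - gamma ^+ n * vmax <= u n
    <= w b + LV * eps / (1 - gamma).
  by rewrite -!lee_fin -Uu Vbin_n_bounds.
have cu : cvgn u.
  by apply: nondecreasing_is_cvgn => //; exists (w b + LV * eps / (1 - gamma)) => _ [n _ <-];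
    case/andP: (u_bounds n).
exists (limn u); split; first by rewrite /Vbin (funext Uu); exact: EFin_lim cu.
have gamma_norm_lt1 : `|gamma| < 1 by rewrite ger0_norm.
have /andP[lo hi] := limn_geometric_bounds gamma_norm_lt1 cu u_bounds.
by rewrite ler_norml; apply/andP; split; lra.
Qed.

Variable Lpi : R.
Hypotheses (Lpi_ge0 : 0 <= Lpi) (phi_eps : forall b, B b -> norm1 (phi b - b) <= eps)
  (pi_lip : forall b1 b2, B b1 -> B b2 ->
     norm1 (fun a => pi b1 a - pi b2 a) <= Lpi * norm1 (b1 - b2)).

Lemma Vtrue_Vbin_dist b : B b ->
  (`|Vtrue T Ob r gamma pi b - Vbin T Ob r gamma B C phi p pi (phi b)|
    <= (Lpi * eps * vmax / (1 - gamma) + LV * eps / (1 - gamma))%:E)%E.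
Proof.
move=> hb; have [u [-> w_u]] := Vbin_dist hb.
have pi_close x : B x -> norm1 (fun a => pi x a - pi (phi x) a) <= Lpi * eps.
  move=> hx; rewrite (le_trans (pi_lip hx (C_sub (phi_C hx)))) //.
  by rewrite ler_wpM2l // norm1_subC phi_eps.
have v_w := vtrue_policy_dist pi_dist pi_phi_dist pi_close hb.
rewrite (Vtrue_vtrue pi_dist) // -EFinB lee_fin.
by rewrite (le_trans (ler_distD (w b) _ _)) // lerD.
Qed.

End StableLiftedValue.

End Abstraction.

End InvariantSet.
End POMDP.

Lemma errors_le_Lphi1 (R : realType) (Lpi LV Rmax gamma eps : R) :
  0 <= LV -> 0 <= Rmax -> 0 <= eps -> 0 <= gamma < 1 ->
  Lpi * eps * vmax Rmax gamma / (1 - gamma) + LV * eps / (1 - gamma)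
    <= Lphi1 Lpi LV Rmax gamma * eps.
Proof.
move=> LV0 Rmax0 eps0 /andP[g0 g1]; have omg_gt0 : 0 < 1 - gamma by rewrite subr_gt0.
rewrite -subr_ge0; set e := (X in 0 <= X).
have -> : e = (Rmax + LV) * eps / (1 - gamma) + Rmax * eps / (1 - gamma) ^+ 2.
  by rewrite /e /Lphi1 /vmax; field; rewrite gt_eqF.
have omg_ge0 := ltW omg_gt0.
by apply: addr_ge0; apply: divr_ge0; rewrite ?exprn_ge0 // mulr_ge0 // addr_ge0.
Qed.

Unset Implicit Arguments.

Theorem theorem2 (R : realType) (S A O : finType)
  (T : S -> A -> S -> R) (Ob : S -> O -> R) (r : S -> A -> R)
  (Rmax gamma : R)
  (hT : forall s a, is_dist (T s a))
  (hOb : forall s, is_dist (Ob s))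
  (hr : forall s a, 0 <= r s a <= Rmax)
  (hgamma : 0 <= gamma < 1)
  (b0 : belief R S) (hb0 : is_dist b0)
  (phi : belief R S -> belief R S) (C : set (belief R S))
  (p : belief R S -> belief R S -> R)
  (pi : belief R S -> A -> R) (Lpi LV eps : R) :
  let B := [set b | reachable T Ob b0 b] in
  0 <= eps ->
  C `<=` B ->
  (forall b, B b -> C (phi b)) ->
  (forall b, B b -> norm1 (phi b - b) <= eps) ->
  (forall b1 b2, B b1 -> B b2 -> phi b1 = phi b2 -> norm1 (b1 - b2) <= eps) ->
  (* p_c is a probability distribution on B supported on phi^{-1}(c) *)
  (forall c, C c ->
     (forall b, 0 <= p c b) /\
     (forall b, p c b != 0 -> B b /\ phi b = c) /\
     \esum_(b in B) (p c b)%:E = 1%E) ->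
  (forall b, B b -> is_dist (pi b)) ->
  0 <= Lpi -> 0 <= LV ->
  (* local stability *)
  (forall b1 b2, B b1 -> B b2 ->
     norm1 (fun a => pi b1 a - pi b2 a) <= Lpi * norm1 (b1 - b2)) ->
  (* value stability of V_true^{[pi_phi]_true} *)
  (forall b1 b2, B b1 -> B b2 ->
     (`| Vtrue T Ob r gamma (fun b => pi (phi b)) b1
        - Vtrue T Ob r gamma (fun b => pi (phi b)) b2 |
      <= (LV * norm1 (b1 - b2))%:E)%E) ->
  forall b, B b ->
    (`| Vtrue T Ob r gamma pi b
       - Vbin T Ob r gamma B C phi p pi (phi b) |
     <= (Lphi1 Lpi LV Rmax gamma * eps)%:E)%E.
Proof.
move=> B eps_ge0 C_sub phi_C phi_eps phi_close p_dist pi_dist Lpi_ge0 LV_ge0 pi_lip V_lip b hb.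
have B_dist x : B x -> is_dist x by exact: reachable_dist.
have B_bupd x a o : B x -> 0 < Pobs T Ob x a o -> B (bupd T Ob x a o) by exact: reachS.
have [gamma_ge0 gamma_lt1] := andP hgamma.
have Rmax_ge0 : 0 <= Rmax.
  have [a _] := dist_witness (pi_dist b hb).
  by case/andP: (rb_bound hr a (B_dist b hb)); exact: le_trans.
apply: le_trans (Vtrue_Vbin_dist hT hOb hr B_dist B_bupd gamma_ge0 Rmax_ge0 gamma_lt1
  C_sub phi_C pi_dist p_dist LV_ge0 eps_ge0 phi_close V_lip Lpi_ge0 phi_eps pi_lip hb) _.
by rewrite lee_fin errors_le_Lphi1.
Qed.
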